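(* Let $T$ be a subcubic tree with $\gamma_e^*(T)=\gamma_{e,f}^*(T)>1$. For $i\in\{1,2,3\}$ let $V_i$ be the set of vertices of degree $i$ in $T$, and let $D$ be a minimum porous exponential dominating set of $T$. Then: (i) $w^*_{(T,D)}(u)=1$ for every vertex $u\in V_1\cup V_2$; (ii) $D\subseteq V_3$ and $N_T(V_1\cup V_2)\subseteq V_3\setminus D$, where $N_T(X)$ denotes the set of vertices adjacent to some vertex of $X$; (iii) $T$ contains no vertex $u\in V_1$ and vertex $w\in V_2$ with $\mathrm{dist}_T(u,w)=2$; (iv) $T$ contains no two vertices $u_1,u_2\in V_1$ and vertex $v\in V_2$ such that $\mathrm{dist}_T(u_1,u_2)=2$ and $\mathrm{dist}_T(u_1,v)\in\{3,4\}$.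
   Context: All graphs are finite, simple and undirected; subcubic means maximum degree at most $3$. For a graph $G$ and $D\subseteq V(G)$, let $w^*_{(G,D)}(u)=\sum_{v\in D}\left(\frac12\right)^{\mathrm{dist}_G(u,v)-1}$ for $u\in V(G)$, where $\mathrm{dist}_G$ is the usual distance and $\left(\frac12\right)^\infty=0$. $D$ is a porous exponential dominating set if $w^*_{(G,D)}(u)\ge 1$ for every $u\in V(G)$; $\gamma_e^*(G)$ is the minimum size of such a set, and a porous exponential dominating set of that size is called minimum. The fractional porous exponential domination number $\gamma_{e,f}^*(G)$ is the optimum value of the linear program: minimize $\sum_{u\in V(G)}x(u)$ subject to $\sum_{u\in V(G)}\left(\frac12\right)^{\mathrm{dist}_G(u,v)-1}x(u)\ge 1$ for every $v\in V(G)$ and $x\ge 0$. *)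

From HB Require Import structures.
From mathcomp Require Import all_boot all_order all_algebra.
Set Implicit Arguments. Unset Strict Implicit. Unset Printing Implicit Defensive.
Import Order.TTheory GRing.Theory Num.Theory.

Definition simple_graph (T : finType) (e : rel T) : Prop :=
  symmetric e /\ irreflexive e.

Definition is_tree (T : finType) (e : rel T) : Prop :=
  simple_graph e /\
  (forall u v : T, connect e u v) /\
  (forall c : seq T, uniq c -> 2 < size c -> ~~ cycle e c).

Definition deg (T : finType) (e : rel T) (v : T) : nat := #|[set w | e v w]|.

Definition subcubic (T : finType) (e : rel T) : Prop := forall v, deg e v <= 3.

Fixpoint within (T : finType) (e : rel T) (n : nat) (u v : T) : bool :=
  if n is n'.+1 then within e n' u v || [exists w, within e n' u w && e w v]
  else u == v.

(* Graph distance; meaningful when connect e u v (then it is < #|T|). *)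
Definition dist (T : finType) (e : rel T) (u v : T) : nat :=
  find (fun n => within e n u v) (iota 0 #|T|).

(* (1/2)^(dist(u,v) - 1) = 2 * (1/2)^dist(u,v), and 0 if dist = infinity *)
Definition wt (R : numFieldType) (T : finType) (e : rel T) (u v : T) : R :=
  (if connect e u v then 2 * (2^-1) ^+ dist e u v else 0)%R.

Definition wstar (R : numFieldType) (T : finType) (e : rel T) (D : {set T}) (u : T) : R :=
  (\sum_(v in D) wt R e u v)%R.

Definition porous_exp_dom (R : numFieldType) (T : finType) (e : rel T) (D : {set T}) : Prop :=
  forall u : T, (1 <= wstar R e D u)%R.

(* D is a minimum porous exponential dominating set; so gamma_e^*(G) = #|D|. *)
Definition min_porous_exp_dom (R : numFieldType) (T : finType) (e : rel T) (D : {set T}) : Prop :=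
  porous_exp_dom R e D /\ (forall D' : {set T}, porous_exp_dom R e D' -> #|D| <= #|D'|).

Definition frac_feasible (R : numFieldType) (T : finType) (e : rel T) (x : T -> R) : Prop :=
  (forall u, 0 <= x u)%R /\ (forall v, 1 <= \sum_(u : T) wt R e u v * x u)%R.

(* val is the optimum value of the LP, i.e. val = gamma_{e,f}^*(G) *)
Definition is_frac_opt (R : numFieldType) (T : finType) (e : rel T) (val : R) : Prop :=
  (exists x, frac_feasible e x /\ (\sum_(u : T) x u)%R = val) /\
  (forall x, frac_feasible e x -> (val <= \sum_(u : T) x u)%R).

Arguments wt R [T] e u v.
Arguments wstar R [T] e D u.
Arguments porous_exp_dom R [T] e D.
Arguments min_porous_exp_dom R [T] e D.
Arguments is_frac_opt R [T] e val.

From HB Require Import structures.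
From mathcomp Require Import all_boot all_order all_algebra ring lra.
Set Implicit Arguments. Unset Strict Implicit. Unset Printing Implicit Defensive.
Import Order.TTheory GRing.Theory Num.Theory.

(* Rooting the tree at a vertex z and counting every edge once from its end
   farther from z gives sum_u 2^-dist(u,z) deg u = 3 (sum_u 2^-dist(u,z) - 1),
   so y(u) = (3 - deg u) / 6 is a fractional solution with every constraint
   tight.  As gamma_e^* = gamma_{e,f}^*, summing these constraints over D yields
   complementary slackness: w^*(u) = 1 whenever deg u < 3, which is (i).
   Everything else is read off by evaluating w^* near a leaf or a vertex of
   degree 2: seen from any z in D, the weights 2^-dist(., z) of a few nearby
   vertices satisfy a fixed linear relation that depends only on which
   neighbour points towards z, and summing it over D contradicts w^* >= 1.
   Finally two adjacent vertices cannot both have w^* = 1, since that would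
   make a sum of powers of 1/2 equal to 1/3. *)

Section Distance.
Variables (T : finType) (e : rel T).

Lemma within_path n u v : within e n u v ->
  exists p, [/\ path e u p, last u p = v & size p <= n].
Proof.
elim: n v => [|n IHn] v /=; first by move/eqP=> <-; exists [::].
case/orP=> [/IHn [p [up pv le_p_n]] | /existsP [w /andP [/IHn [p [up pw le_p_n]] ewv]]].
  by exists p; split=> //; apply: leqW.
by exists (rcons p v); rewrite rcons_path up pw ewv last_rcons size_rcons.
Qed.

Lemma path_within p u : path e u p -> within e (size p) u (last u p).
Proof.
elim/last_ind: p => [|p x IHp] /=; first by rewrite eqxx.
rewrite rcons_path size_rcons last_rcons => /andP [up ex] /=.
by apply/orP; right; apply/existsP; exists (last u p); rewrite IHp.
Qed.

Lemma dist_le_card u v : dist e u v <= #|T|.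
Proof.
by have := find_size (fun n => within e n u v) (iota 0 #|T|); rewrite size_iota.
Qed.

Lemma dist_le_within n u v : within e n u v -> dist e u v <= n.
Proof.
move=> uv; case: (leqP #|T| n) => [/(leq_trans (dist_le_card u v)) //| ltnT].
rewrite leqNgt; apply/negP => /(before_find 0).
by rewrite nth_iota // add0n uv.
Qed.

Lemma dist_le_path p u : path e u p -> dist e u (last u p) <= size p.
Proof. by move/path_within/dist_le_within. Qed.

Lemma distxx u : dist e u u = 0.
Proof. by apply/eqP; rewrite -leqn0; apply: (@dist_le_within 0) => /=. Qed.

Hypothesis e_connected : forall u v, connect e u v.

Lemma within_dist u v : within e (dist e u v) u v.
Proof.
have has_within : has (fun n => within e n u v) (iota 0 #|T|).
  case/connectP: (e_connected u v) => p up ->; case/shortenP: up => q uq uniq_q _.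
  apply/hasP; exists (size q); last exact: path_within.
  rewrite mem_iota add0n /=; have := max_card (mem (u :: q)).
  by rewrite (card_uniqP uniq_q).
have := nth_find 0 has_within; rewrite has_find size_iota in has_within.
by rewrite nth_iota // add0n.
Qed.

Lemma shortest_path u v :
  exists p, [/\ path e u p, last u p = v & size p = dist e u v].
Proof.
case: (within_path (within_dist u v)) => p [up pv lep]; exists p; split=> //.
by apply/eqP; rewrite eqn_leq lep -pv dist_le_path.
Qed.

Lemma dist_eq0 u v : (dist e u v == 0) = (u == v).
Proof.
apply/idP/eqP => [/eqP uv0 | ->]; last by rewrite distxx.
by have := within_dist u v; rewrite uv0 => /eqP.
Qed.

Lemma dist_adj_le x y z : e x y -> dist e x z <= (dist e y z).+1.
Proof.
move=> exy; case: (shortest_path y z) => p [yp pz <-].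
by have := @dist_le_path (y :: p) x; rewrite /= exy yp pz; apply.
Qed.

Lemma exists_parent x z : x != z -> exists2 y, e x y & (dist e y z).+1 = dist e x z.
Proof.
move=> xz; case: (shortest_path x z) => [[|y p] [xp pz size_p]].
  by move: pz xz => /= ->; rewrite eqxx.
move: xp => /= /andP [exy yp]; exists y => //.
apply/eqP; rewrite eqn_leq dist_adj_le // andbT -size_p /= ltnS -pz.
exact: dist_le_path.
Qed.

Lemma dist_succP x z n : dist e x z = n.+1 -> exists2 y, e x y & dist e y z = n.
Proof.
move=> xz; have /exists_parent [y exy yz] : x != z by rewrite -dist_eq0 xz.
by exists y => //; move: yz; rewrite xz => -[].
Qed.

Lemma dist1P x y : dist e x y = 1 -> e x y.
Proof. by case/dist_succP => y' exy' /eqP; rewrite dist_eq0 => /eqP <-. Qed.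

End Distance.

Section Neighbours.
Variables (T : finType) (e : rel T).

Lemma mem_full_neighbours s x p : uniq s -> {subset s <= e x} ->
  size s = deg e x -> e x p -> p \in s.
Proof.
move=> uniq_s sx size_s exp; apply: contraT => p_notin_s.
have : #|p :: s| <= deg e x.
  by apply: subset_leq_card; apply/subsetP => y; rewrite in_cons inE => /predU1P [->|/sx].
by rewrite (card_uniqP _) /= ?p_notin_s // size_s ltnn.
Qed.

Lemma exists_neighbour_notin s x : size s < deg e x -> exists2 p, e x p & p \notin s.
Proof.
move=> lt_s_deg; have : ~~ ([set w | e x w] \subset s).
  apply: contraTN lt_s_deg => /subset_leq_card le_deg_s.
  by rewrite -leqNgt (leq_trans le_deg_s) // card_size.
by case/subsetPn => p; rewrite inE; exists p.
Qed.

Lemma exists_other_neighbour x a n : deg e x = n.+2 -> exists2 b, e x b & b != a.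
Proof.
move=> deg_x; have [|b exb] := @exists_neighbour_notin [:: a] x; first by rewrite deg_x.
by rewrite inE; exists b.
Qed.

Lemma leaf_neighbour x a p : deg e x = 1 -> e x a -> e x p -> p = a.
Proof.
move=> deg_x exa exp; suff: p \in [:: a] by rewrite inE => /eqP.
by apply: mem_full_neighbours exp => // y; rewrite inE => /eqP ->.
Qed.

Lemma deg2_neighbour x a b p : deg e x = 2 -> e x a -> e x b -> a != b ->
  e x p -> p = a \/ p = b.
Proof.
move=> deg_x exa exb ab exp.
have : p \in [:: a; b].
  apply: mem_full_neighbours exp => //; first by rewrite /= inE ab.
  by move=> y; rewrite !inE => /orP [] /eqP ->.
by rewrite !inE => /orP [] /eqP ->; [left|right].
Qed.

Lemma deg3_neighbour x a b c p : deg e x = 3 -> e x a -> e x b -> e x c ->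
  a != b -> a != c -> b != c -> e x p -> [\/ p = a, p = b | p = c].
Proof.
move=> deg_x exa exb exc ab ac bc exp.
have : p \in [:: a; b; c].
  apply: mem_full_neighbours exp => //; first by rewrite /= !inE negb_or ab ac bc.
  by move=> y; rewrite !inE => /orP [/eqP -> | /orP [] /eqP ->].
by rewrite !inE => /orP [/eqP -> | /orP [] /eqP ->]; [apply: Or31|apply: Or32|apply: Or33].
Qed.

End Neighbours.

Section ComplementarySlackness.
Variables (R : realFieldType) (T : finType) (e : rel T) (D : {set T}) (y : T -> R).
Local Open Scope ring_scope.

Lemma complementary_slackness : porous_exp_dom R e D -> (forall u, 0 <= y u) ->
  (forall z, \sum_u wt R e u z * y u = 1) -> #|D|%:R <= \sum_u y u ->
  forall u, 0 < y u -> wstar R e D u = 1.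
Proof.
move=> D_porous y_ge0 y_tight le_D_y u y_gt0.
have D_sum : #|D|%:R = \sum_v y v * wstar R e D v.
  rewrite -sumr_const (eq_bigr (fun z => \sum_v wt R e v z * y v)) => [|z _]; last first.
    by rewrite y_tight.
  rewrite exchange_big /=; apply: eq_bigr => v _.
  by rewrite /wstar mulr_sumr; apply: eq_bigr => z _; rewrite mulrC.
have slack_ge0 v : true -> 0 <= y v * (wstar R e D v - 1).
  by rewrite mulr_ge0 // subr_ge0.
have slack0 : \sum_v y v * (wstar R e D v - 1) = 0.
  apply/eqP; rewrite eq_le sumr_ge0 // andbT.
  under eq_bigr do rewrite mulrBr mulr1.
  by rewrite sumrB -D_sum subr_le0.
move: (psumr_eq0P slack_ge0 slack0 (i := u) isT) => /eqP.
by rewrite mulf_eq0 gt_eqF //= subr_eq0 => /eqP.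
Qed.

End ComplementarySlackness.

Section Dyadic.
Variable R : realFieldType.
Local Open Scope ring_scope.

Lemma three_sum_halfpow_neq1 (I : finType) (P : pred I) (n : I -> nat) :
  3 * \sum_(i | P i) (2^-1 : R) ^+ n i != 1.
Proof.
apply/eqP => sum3; pose N := (\max_(i | P i) n i)%N.
have scale i : P i -> (2 ^ (N - n i))%N%:R = 2 ^+ N * 2^-1 ^+ n i :> R.
  move=> Pi; have le_nN : (n i <= N)%N := leq_bigmax_cond _ Pi.
  rewrite natrX -{2}(subnK le_nN) exprD exprVn -mulrA divff ?mulr1 //.
  by rewrite expf_neq0 // pnatr_eq0.
have : (3 * \sum_(i | P i) 2 ^ (N - n i))%N%:R = (2 ^ N)%N%:R :> R.
  by rewrite natrM natr_sum (eq_bigr _ scale) -mulr_sumr mulrCA sum3 mulr1 natrX.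
move/eqP; rewrite eqr_nat => /eqP three_pow.
have : (3 %| 2 ^ N)%N by rewrite -three_pow dvdn_mulr.
by rewrite Euclid_dvdX.
Qed.

End Dyadic.

Section Tree.
Variables (T : finType) (e : rel T).
Hypothesis e_tree : is_tree e.

Let e_sym : symmetric e. Proof. by case: e_tree => [[]]. Qed.
Let e_irr : irreflexive e. Proof. by case: e_tree => [[]]. Qed.
Let e_connected u v : connect e u v. Proof. by case: e_tree => _ []. Qed.
Let e_acyclic c : uniq c -> 2 < size c -> cycle e c -> False.
Proof. by case: e_tree => _ [_ acyclic] /acyclic/[apply]/negP. Qed.

Lemma path_in_ball z m a b : dist e a z <= m -> dist e b z <= m ->
  exists q, [/\ path e a q, last a q = b, uniq (a :: q) &
                forall w, w \in q -> dist e w z <= m].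
Proof.
pose e_ball := [rel x y | [&& e x y, dist e x z <= m & dist e y z <= m]].
have ball_sym : symmetric e_ball.
  by move=> x y /=; rewrite e_sym; congr (_ && _); rewrite andbC.
have to_center k x : dist e x z <= k -> dist e x z <= m -> connect e_ball x z.
  elim: k x => [|k IHk] x; first by rewrite leqn0 dist_eq0 // => /eqP ->.
  move=> xk xm; have [-> //|xz] := eqVneq x z.
  case: (exists_parent e_connected xz) => y exy yx.
  have ym : dist e y z <= m by apply: leq_trans xm; rewrite -yx.
  apply: connect_trans (IHk y _ ym); last by rewrite -ltnS yx.
  by apply: connect1; rewrite /= exy xm.
move=> am bm; have : connect e_ball a b.
  apply: connect_trans (to_center _ _ (leqnn _) am) _.
  by rewrite (sym_connect_sym ball_sym); apply: to_center bm.
case/connectP=> p ap ->; case/shortenP: ap => q aq uniq_q _; exists q; split=> //.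
  by apply: sub_path aq => x y /andP [].
elim: q a aq {uniq_q am} => // y q IHq a /= /andP [/and3P [_ _ ym] yq] w.
by rewrite in_cons => /predU1P [-> //|]; apply: IHq yq w.
Qed.

Lemma parent_unique x z y1 y2 : e x y1 -> e x y2 ->
  (dist e y1 z).+1 = dist e x z -> (dist e y2 z).+1 = dist e x z -> y1 = y2.
Proof.
move=> exy1 exy2 y1x y2x; apply/eqP/negPn/negP => y12.
have le_y21 : dist e y2 z <= dist e y1 z by rewrite -ltnS y2x y1x.
case: (path_in_ball (leqnn _) le_y21) => q [y1q qy2 uniq_q q_ball].
apply: (e_acyclic (c := x :: y1 :: q)).
- rewrite cons_uniq uniq_q andbT in_cons negb_or; apply/andP; split.
    by apply/eqP => xy1; move: y1x; rewrite xy1 => /eqP; rewrite gtn_eqF.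
  by apply/negP => /q_ball; rewrite -y1x ltnn.
- by case: q qy2 {y1q uniq_q q_ball} => [/= y12E|]; [rewrite y12E eqxx in y12|].
- by rewrite /= rcons_path exy1 y1q qy2 e_sym exy2.
Qed.

Lemma dist_adj_neq x y z : e x y -> dist e x z != dist e y z.
Proof.
move=> exy; apply/eqP => xyz.
have [xz|xz] := eqVneq x z.
  move: xyz; rewrite -xz distxx => /esym/eqP; rewrite dist_eq0 // => /eqP yx.
  by move: exy; rewrite yx e_irr.
have yz : y != z by rewrite -(dist_eq0 e_connected) -xyz dist_eq0.
case: (exists_parent e_connected xz) => px expx pxx.
case: (exists_parent e_connected yz) => py eypy pyy.
have le_pyx : dist e py z <= dist e px z by rewrite -ltnS pyy pxx xyz.
case: (path_in_ball (leqnn _) le_pyx) => q [pxq qpy uniq_q q_ball].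
have far w : w \in px :: q -> dist e w z < dist e x z.
  by rewrite in_cons => /predU1P [->|/q_ball]; rewrite -pxx.
apply: (e_acyclic (c := y :: x :: px :: q)) => //.
- rewrite cons_uniq [uniq (x :: _)]cons_uniq uniq_q andbT in_cons negb_or -andbA.
  apply/and3P; split; first by apply: contraTneq exy => ->; rewrite e_irr.
    by apply/negP => /far; rewrite xyz ltnn.
  by apply/negP => /far; rewrite ltnn.
- by rewrite /= rcons_path e_sym exy expx pxq qpy e_sym eypy.
Qed.

Lemma dist_adj x y z : e x y ->
  dist e y z = (dist e x z).+1 \/ dist e x z = (dist e y z).+1.
Proof.
move=> exy; have xy := dist_adj_le e_connected z exy.
have := dist_adj_le e_connected z (etrans (e_sym y x) exy).
case: (ltngtP (dist e x z) (dist e y z)) => [lt|lt|eq] yx.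
- by left; apply/eqP; rewrite eqn_leq yx lt.
- by right; apply/eqP; rewrite eqn_leq xy lt.
- by move: (dist_adj_neq z exy); rewrite eq eqxx.
Qed.

Lemma adj_dist1 x y : e x y -> dist e x y = 1.
Proof.
move=> exy; apply/eqP; rewrite eqn_leq (@dist_le_path _ _ [:: y]) /= ?exy //.
by rewrite lt0n dist_eq0 //; apply: contraTneq exy => ->; rewrite e_irr.
Qed.

Lemma dist_child x p q z : e x p -> (dist e p z).+1 = dist e x z ->
  e x q -> q != p -> dist e q z = (dist e x z).+1.
Proof.
move=> exp px exq qp; case: (dist_adj z exq) => // qx.
by move: qp; rewrite (parent_unique exq exp (esym qx) px) eqxx.
Qed.

Lemma leaf_dist x y z : deg e x = 1 -> e x y -> x != z ->
  dist e x z = (dist e y z).+1.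
Proof.
move=> deg_x exy xz; case: (exists_parent e_connected xz) => p exp px.
by rewrite -px (leaf_neighbour deg_x exy exp).
Qed.

Lemma twin_leaves_parent u1 u2 v t z : deg e u1 = 1 -> deg e u2 = 1 -> deg e v = 3 ->
  e v u1 -> e v u2 -> e v t -> u1 != u2 -> u1 != t -> u2 != t ->
  u1 != z -> u2 != z -> v != z -> (dist e t z).+1 = dist e v z.
Proof.
move=> deg_u1 deg_u2 deg_v evu1 evu2 evt u12 u1t u2t u1z u2z vz.
case: (exists_parent e_connected vz) => p evp pv.
have not_leaf u : p = u -> deg e u = 1 -> e v u -> u != z -> False.
  move=> pu deg_u evu uz; have euv : e u v by rewrite e_sym.
  by move: pv; rewrite pu (leaf_dist deg_u euv uz) => /eqP; rewrite gtn_eqF.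
case: (deg3_neighbour deg_v evu1 evu2 evt u12 u1t u2t evp) => [pu|pu|<- //].
  by case: (not_leaf _ pu deg_u1 evu1 u1z).
by case: (not_leaf _ pu deg_u2 evu2 u2z).
Qed.

Section Weights.
Variable R : realFieldType.
Local Open Scope ring_scope.

Definition half_dist (z x : T) : R := 2^-1 ^+ dist e x z.

Lemma wtE u v : wt R e u v = 2 * half_dist v u.
Proof. by rewrite /wt e_connected. Qed.

Lemma half_dist_gt0 z x : 0 < half_dist z x.
Proof. by rewrite exprn_gt0 // invr_gt0 ltr0n. Qed.

Lemma half_distxx z : half_dist z z = 1.
Proof. by rewrite /half_dist distxx expr0. Qed.

Lemma half_dist_succ z u v : dist e v z = (dist e u z).+1 ->
  half_dist z u = 2 * half_dist z v.
Proof. by rewrite /half_dist => ->; rewrite exprS mulrA divff ?mul1r ?pnatr_eq0. Qed.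

Lemma sum_parents z x (c : R) :
  \sum_(y | e x y && ((dist e y z).+1 == dist e x z)) c = (x != z)%:R * c.
Proof.
have [->|xz] := eqVneq x z.
  by rewrite big_pred0 ?mul0r // => y; rewrite distxx andbF.
case: (exists_parent e_connected xz) => p exp px; rewrite mul1r (big_pred1 p) //.
move=> y /=; apply/andP/eqP => [[exy /eqP yx]|->]; last by rewrite exp px.
exact: parent_unique exy exp yx px.
Qed.

(* Each edge joins a child c to its parent towards z and contributes
   half_dist z c + 2 * half_dist z c; every vertex other than z is a child once. *)
Lemma sum_half_dist_deg z :
  \sum_u half_dist z u * (deg e u)%:R = 3 * (\sum_u half_dist z u - 1).
Proof.
pose parent x y := (dist e y z).+1 == dist e x z.
have split_deg u : half_dist z u * (deg e u)%:R =
    \sum_(v | e u v && parent u v) half_dist z u +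
    \sum_(v | e u v && ~~ parent u v) 2 * half_dist z v.
  rewrite mulr_natr /deg -sumr_const (bigID (parent u)) /=.
  congr (_ + _); first by apply: eq_bigl => v; rewrite inE.
  rewrite (eq_bigl (fun v => e u v && ~~ parent u v)) => [|v]; last by rewrite inE.
  apply: eq_bigr => v /andP [euv not_parent]; apply: half_dist_succ.
  by case: (dist_adj z euv) => // vu; rewrite /parent vu eqxx in not_parent.
have child_parent v u : e v u && ~~ parent v u = e u v && parent u v.
  rewrite e_sym /parent; apply/andP/andP => -[euv uv]; split=> //.
    by case: (dist_adj z euv) => vu; [rewrite vu eqxx in uv|rewrite vu].
  by rewrite -(eqP uv) gtn_eqF.
rewrite (eq_bigr _ (fun u _ => split_deg u)) big_split /=.
rewrite [X in _ + X](exchange_big_dep predT) //=.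
under [X in X + _ = _]eq_bigr do rewrite sum_parents.
under [X in _ + X = _]eq_bigr => j _.
  by rewrite (eq_bigl _ _ (child_parent^~ j)) sum_parents; over.
have sum_split : \sum_u half_dist z u = 1 + \sum_u (u != z)%:R * half_dist z u.
  rewrite (bigD1 z) //= [X in _ = _ + X](bigD1 z) //= eqxx mul0r add0r half_distxx.
  by congr (_ + _); apply: eq_bigr => u uz; rewrite uz mul1r.
under [X in _ + X = _]eq_bigr do rewrite mulrCA.
by rewrite -mulr_sumr sum_split; ring.
Qed.

(* In each configuration below, the neighbour through which the vertex of
   degree 2 or 3 reaches z determines all the weights up to a common factor. *)
Lemma leaf_deg2_half_dist u v w w' z : deg e u = 1%N -> deg e w = 2%N ->
  e u v -> e v w -> e w w' -> w' != v -> u != z -> w != z ->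
  4 * half_dist z u - 5 * half_dist z w + 2 * half_dist z w' = 0.
Proof.
move=> deg_u deg_w euv evw eww' w'v uz wz.
have ewv : e w v by rewrite e_sym.
have vw' : v != w' by rewrite eq_sym.
have := half_dist_succ (leaf_dist deg_u euv uz).
case: (exists_parent e_connected wz) => p ewp pw.
case: (deg2_neighbour deg_w ewv eww' vw' ewp) => pE; rewrite {p ewp}pE in pw.
- have := half_dist_succ (esym pw).
  have := half_dist_succ (dist_child ewv pw eww' w'v).
  lra.
- have := half_dist_succ (esym pw).
  have := half_dist_succ (dist_child eww' pw ewv vw').
  lra.
Qed.

Lemma leaf_path_deg2_half_dist u v t w s z : deg e u = 1%N -> deg e w = 2%N ->
  e u v -> e v t -> e t w -> e w s -> s != t -> u != z -> w != z ->
  (dist e t z).+1 = dist e v z -> 2 * half_dist z u <= half_dist z w.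
Proof.
move=> deg_u deg_w euv evt etw ews st uz wz tv.
have ewt : e w t by rewrite e_sym.
have ts : t != s by rewrite eq_sym.
have := half_dist_succ (leaf_dist deg_u euv uz).
have := half_dist_succ (esym tv).
have := half_dist_gt0 z u.
case: (exists_parent e_connected wz) => p ewp pw.
case: (deg2_neighbour deg_w ewt ews ts ewp) => pE; rewrite {p ewp}pE in pw.
- have -> : half_dist z w = half_dist z v by rewrite /half_dist -pw tv.
  lra.
- have := half_dist_succ (dist_child ews pw ewt ts).
  lra.
Qed.

Lemma leaf_path3_deg2_half_dist u v t x y w s z :
  deg e u = 1%N -> deg e x = 3%N -> deg e w = 2%N ->
  e u v -> e v t -> e t x -> e x w -> e x y -> e w s ->
  w != t -> w != y -> t != y -> s != x -> u != z -> x != z -> w != z ->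
  (dist e t z).+1 = dist e v z ->
  16 * half_dist z u + 10 * half_dist z s <= 21 * half_dist z w.
Proof.
move=> deg_u deg_x deg_w euv evt etx exw exy ews wt wy ty sx uz xz wz tv.
have ext : e x t by rewrite e_sym.
have ewx : e w x by rewrite e_sym.
have xs : x != s by rewrite eq_sym.
have tw : t != w by rewrite eq_sym.
have yw : y != w by rewrite eq_sym.
have yt : y != t by rewrite eq_sym.
have := half_dist_succ (leaf_dist deg_u euv uz).
have := half_dist_succ (esym tv).
have := half_dist_gt0 z w.
case: (exists_parent e_connected xz) => p exp px.
case: (deg3_neighbour deg_x exw ext exy wt wy ty exp) => pE; rewrite {p exp}pE in px.
- have := half_dist_succ (dist_child exw px ext tw).
  have := half_dist_succ (esym px).
  case: (exists_parent e_connected wz) => q ewq qw.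
  case: (deg2_neighbour deg_w ewx ews xs ewq) => qE; rewrite {q ewq}qE in qw.
    by move: px; rewrite -qw => /eqP; rewrite gtn_eqF.
  have := half_dist_succ (esym qw).
  lra.
- have -> : half_dist z v = half_dist z x by rewrite /half_dist -px tv.
  have wx := dist_child ext px exw wt.
  have := half_dist_succ wx.
  have := half_dist_succ (dist_child ewx (esym wx) ews sx).
  lra.
- have wx := dist_child exy px exw wy.
  have := half_dist_succ wx.
  have := half_dist_succ (dist_child exy px ext ty).
  have := half_dist_succ (dist_child ewx (esym wx) ews sx).
  lra.
Qed.

Hypothesis e_subcubic : subcubic e.

Definition deficit u : R := (3 - deg e u)%:R / 6.

Lemma sum_wt_deficit z : \sum_u wt R e u z * deficit u = 1.
Proof.
have term u : wt R e u z * deficit u =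
    3^-1 * (3 * half_dist z u - half_dist z u * (deg e u)%:R).
  by rewrite wtE /deficit natrB ?e_subcubic //; field.
rewrite (eq_bigr _ (fun u _ => term u)) -mulr_sumr sumrB -mulr_sumr.
by rewrite sum_half_dist_deg; field.
Qed.

Section Extremal.
Variable D : {set T}.
Hypothesis D_min : min_porous_exp_dom R e D.
Hypothesis D_frac_opt : is_frac_opt R e #|D|%:R.

Let D_porous u : 1 <= wstar R e D u. Proof. by case: D_min. Qed.

Lemma wstar_low_deg u : (deg e u < 3)%N -> wstar R e D u = 1.
Proof.
move=> deg_u; apply: (@complementary_slackness _ _ _ _ deficit D_min.1) => [v|z||].
- by rewrite divr_ge0 ?ler0n.
- exact: sum_wt_deficit.
- by apply: D_frac_opt.2; split=> [v|v]; rewrite ?sum_wt_deficit // divr_ge0 ?ler0n.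
- by rewrite divr_gt0 // ltr0n subn_gt0.
Qed.

Lemma wstarE u : wstar R e D u = \sum_(z in D) 2 * half_dist z u.
Proof. by apply: eq_bigr => z _; rewrite wtE. Qed.

Lemma sum_wt_le_wstar (A : {set T}) u :
  A \subset D -> \sum_(z in A) wt R e u z <= wstar R e D u.
Proof.
move=> AD; rewrite /wstar [X in _ <= X](big_setID A) /= (setIidPr AD) lerDl.
by apply: sumr_ge0 => z _; rewrite wtE mulr_ge0 // ltW ?half_dist_gt0.
Qed.

Lemma mem_D_deg3 v : v \in D -> deg e v = 3%N.
Proof.
move=> vD; apply/eqP; rewrite eqn_leq e_subcubic leqNgt; apply/negP => /wstar_low_deg wv.
have := @sum_wt_le_wstar [set v] v; rewrite sub1set vD big_set1 wtE half_distxx wv.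
by move=> /(_ isT); lra.
Qed.

Lemma low_deg_neq_D u z : (deg e u < 3)%N -> z \in D -> u != z.
Proof. by move=> deg_u zD; apply: contraTneq deg_u => ->; rewrite mem_D_deg3. Qed.

Lemma adj_wstar_neq1 u v : e u v -> wstar R e D u = 1 -> wstar R e D v != 1.
Proof.
move=> euv wu; apply/eqP => wv.
pose P z := (dist e u z).+1 == dist e v z.
pose a := \sum_(z in D | P z) half_dist z u.
pose b := \sum_(z in D | ~~ P z) half_dist z v.
have wuE : wstar R e D u = 2 * a + b.
  rewrite wstarE (bigID P) /= /a /b mulr_sumr; congr (_ + _).
  apply: eq_bigr => z /andP [_ not_Pz].
  case: (dist_adj z euv) => uv; first by rewrite /P uv eqxx in not_Pz.
  by rewrite (half_dist_succ uv).
have wvE : wstar R e D v = a + 2 * b.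
  rewrite wstarE (bigID P) /= /a /b mulr_sumr; congr (_ + _).
  by apply: eq_bigr => z /andP [_ /eqP uv]; rewrite (half_dist_succ (esym uv)).
have a_third : 3 * a = 1 by lra.
by move/eqP: (three_sum_halfpow_neq1 R (fun z => (z \in D) && P z) (dist e u)).
Qed.

Lemma low_deg_neighbour_deg3 u v : (deg e u < 3)%N -> e u v -> deg e v = 3%N.
Proof.
move=> deg_u euv; apply/eqP; rewrite eqn_leq e_subcubic leqNgt; apply/negP => deg_v.
by move: (adj_wstar_neq1 euv (wstar_low_deg deg_u)); rewrite wstar_low_deg ?eqxx.
Qed.

Hypothesis D_gt1 : (1 < #|D|)%N.

Lemma low_deg_neighbour_notin_D u v : (deg e u < 3)%N -> e u v -> v \notin D.
Proof.
move=> deg_u euv; apply/negP => vD.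
have [z] : exists z, z \in D :\ v.
  by apply/card_gt0P; move: D_gt1; rewrite (cardsD1 v) vD add1n ltnS.
rewrite !inE => /andP [zv zD].
have := @sum_wt_le_wstar [set v; z] u; rewrite subUset !sub1set vD zD.
rewrite big_setU1 ?inE 1?eq_sym //= big_set1 wstar_low_deg // !wtE.
rewrite [half_dist v u]/half_dist adj_dist1 // => /(_ isT).
have := half_dist_gt0 z u; lra.
Qed.

Lemma wstar_comb_le0 a b c x y t :
  (forall z, z \in D -> a * half_dist z x + b * half_dist z y + c * half_dist z t <= 0) ->
  a * wstar R e D x + b * wstar R e D y + c * wstar R e D t <= 0.
Proof.
move=> pointwise; rewrite !wstarE !mulr_sumr -!big_split /=.
by apply: sumr_le0 => z /pointwise; lra.
Qed.

Lemma no_leaf_deg2_dist2 u w : deg e u = 1%N -> deg e w = 2%N -> dist e u w = 2%N -> False.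
Proof.
move=> deg_u deg_w /(dist_succP e_connected) [v euv /(dist1P e_connected) evw].
have [w' eww' w'v] := exists_other_neighbour v deg_w.
have : 4 * wstar R e D u + -5 * wstar R e D w + 2 * wstar R e D w' <= 0.
  apply: wstar_comb_le0 => z zD.
  have uz : u != z by apply: low_deg_neq_D zD; rewrite deg_u.
  have wz : w != z by apply: low_deg_neq_D zD; rewrite deg_w.
  have := leaf_deg2_half_dist deg_u deg_w euv evw eww' w'v uz wz; lra.
rewrite [wstar _ _ _ u]wstar_low_deg ?deg_u // [wstar _ _ _ w]wstar_low_deg ?deg_w //.
have := D_porous w'; lra.
Qed.

Lemma no_leaf_path_deg2 u v t w : deg e u = 1%N -> deg e w = 2%N ->
  e u v -> e v t -> e t w -> (forall z, z \in D -> (dist e t z).+1 = dist e v z) ->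
  False.
Proof.
move=> deg_u deg_w euv evt etw D_beyond_t.
have [s ews st] := exists_other_neighbour t deg_w.
have : 2 * wstar R e D u + -1 * wstar R e D w + 0 * wstar R e D w <= 0.
  apply: wstar_comb_le0 => z zD.
  have uz : u != z by apply: low_deg_neq_D zD; rewrite deg_u.
  have wz : w != z by apply: low_deg_neq_D zD; rewrite deg_w.
  have := leaf_path_deg2_half_dist deg_u deg_w euv evt etw ews st uz wz (D_beyond_t z zD).
  lra.
by rewrite !wstar_low_deg ?deg_u ?deg_w //; lra.
Qed.

Lemma no_leaf_path3_deg2 u v t x w : deg e u = 1%N -> deg e w = 2%N ->
  e u v -> e v t -> e t x -> e x w -> t != w ->
  (forall z, z \in D -> (dist e t z).+1 = dist e v z) -> False.
Proof.
move=> deg_u deg_w euv evt etx exw tw D_beyond_t.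
have exw_low : (deg e w < 3)%N by rewrite deg_w.
have ewx : e w x by rewrite e_sym.
have deg_x := low_deg_neighbour_deg3 exw_low ewx.
have [y exy] : exists2 y, e x y & y \notin [:: w; t].
  by apply: exists_neighbour_notin; rewrite deg_x.
rewrite !inE negb_or => /andP [yw yt].
have [s ews sx] := exists_other_neighbour x deg_w.
have : 16 * wstar R e D u + 10 * wstar R e D s + -21 * wstar R e D w <= 0.
  apply: wstar_comb_le0 => z zD.
  have uz : u != z by apply: low_deg_neq_D zD; rewrite deg_u.
  have wz : w != z by apply: low_deg_neq_D zD; rewrite deg_w.
  have xz : x != z.
    by apply: contraNneq (low_deg_neighbour_notin_D exw_low ewx) => ->.
  rewrite eq_sym in tw; rewrite eq_sym in yw; rewrite eq_sym in yt.
  have := leaf_path3_deg2_half_dist deg_u deg_x deg_w euv evt etx exw exy ews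
    tw yw yt sx uz xz wz (D_beyond_t z zD).
  lra.
rewrite [wstar _ _ _ u]wstar_low_deg ?deg_u // [wstar _ _ _ w]wstar_low_deg ?deg_w //.
have := D_porous s; lra.
Qed.

Lemma no_twin_leaves_near_deg2 u1 u2 w :
  deg e u1 = 1%N -> deg e u2 = 1%N -> deg e w = 2%N ->
  dist e u1 u2 = 2%N -> dist e u1 w \in [:: 3%N; 4%N] -> False.
Proof.
move=> deg_u1 deg_u2 deg_w d12 d1w.
have u12 : u1 != u2 by rewrite -(dist_eq0 e_connected) d12.
case/(dist_succP e_connected): d12 => v eu1v /(dist1P e_connected) evu2.
have low_u1 : (deg e u1 < 3)%N by rewrite deg_u1.
have evu1 : e v u1 by rewrite e_sym.
have eu2v : e u2 v by rewrite e_sym.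
have leaf_far u : deg e u = 1%N -> e u v -> dist e u w = (dist e v w).+1.
  move=> deg_u euv; have uw : u != w by apply/eqP => uw; move: deg_w; rewrite -uw deg_u.
  exact: leaf_dist deg_u euv uw.
have vw : v != w.
  rewrite -(dist_eq0 e_connected).
  by move: d1w; rewrite leaf_far // !inE => /orP [] /eqP [] ->.
case: (exists_parent e_connected vw) => t evt tv.
have leaf_neq_t u : deg e u = 1%N -> e u v -> u != t.
  move=> deg_u euv; apply/eqP => ut.
  by move: tv; rewrite -ut leaf_far // => /eqP; rewrite gtn_eqF.
have deg_v := low_deg_neighbour_deg3 low_u1 eu1v.
have vD := low_deg_neighbour_notin_D low_u1 eu1v.
have D_beyond_t z : z \in D -> (dist e t z).+1 = dist e v z.
  move=> zD; have u1z : u1 != z by apply: low_deg_neq_D zD; rewrite deg_u1.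
  have u2z : u2 != z by apply: low_deg_neq_D zD; rewrite deg_u2.
  have vz : v != z by apply: contraNneq vD => ->.
  exact: twin_leaves_parent deg_u1 deg_u2 deg_v evu1 evu2 evt u12
    (leaf_neq_t _ deg_u1 eu1v) (leaf_neq_t _ deg_u2 eu2v) u1z u2z vz.
move: d1w; rewrite leaf_far // -tv !inE => /orP [] /eqP [] tw.
  exact: no_leaf_path_deg2 deg_u1 deg_w eu1v evt (dist1P e_connected tw) D_beyond_t.
have t_w : t != w by rewrite -(dist_eq0 e_connected) tw.
case/(dist_succP e_connected): tw => x etx /(dist1P e_connected) exw.
exact: no_leaf_path3_deg2 deg_u1 deg_w eu1v evt etx exw t_w D_beyond_t.
Qed.

End Extremal.

End Weights.
End Tree.

Local Open Scope ring_scope.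

Theorem theorem3 (R : realFieldType) (T : finType) (e : rel T) (D : {set T}) :
  is_tree e -> subcubic e ->
  min_porous_exp_dom R e D ->
  is_frac_opt R e (#|D|%:R) ->
  (1 < #|D|)%N ->
  (* (i) *)
  (forall u : T, deg e u \in [:: 1%N; 2%N] -> wstar R e D u = 1) /\
  (* (ii) *)
  ((forall v : T, v \in D -> deg e v = 3%N) /\
   (forall u v : T, deg e u \in [:: 1%N; 2%N] -> e u v -> deg e v = 3%N /\ v \notin D)) /\
  (* (iii) *)
  ~ (exists u w : T, [/\ deg e u = 1%N, deg e w = 2%N & dist e u w = 2%N]) /\
  (* (iv) *)
  ~ (exists u1 u2 v : T,
       [/\ deg e u1 = 1%N, deg e u2 = 1%N, deg e v = 2%N, dist e u1 u2 = 2%N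
         & dist e u1 v \in [:: 3%N; 4%N]]).
Proof.
move=> e_tree e_subcubic D_min D_frac_opt D_gt1.
have low_deg u : deg e u \in [:: 1%N; 2%N] -> (deg e u < 3)%N.
  by rewrite !inE => /orP [] /eqP ->.
split; first by move=> u /low_deg; apply: wstar_low_deg.
split; first split.
- exact (mem_D_deg3 e_tree e_subcubic D_min D_frac_opt).
- move=> u v /low_deg deg_u euv; split.
    exact (low_deg_neighbour_deg3 e_tree e_subcubic D_min D_frac_opt deg_u euv).
  exact (low_deg_neighbour_notin_D e_tree e_subcubic D_min D_frac_opt D_gt1 deg_u euv).
split.
- case=> u [w [deg_u deg_w duw]].
  exact (no_leaf_deg2_dist2 e_tree e_subcubic D_min D_frac_opt deg_u deg_w duw).
- case=> u1 [u2 [v [deg_u1 deg_u2 deg_v d12 d1v]]].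
  exact (no_twin_leaves_near_deg2 e_tree e_subcubic D_min D_frac_opt D_gt1 deg_u1
    deg_u2 deg_v d12 d1v).
Qed.
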